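(* Let $\lambda \in [0,1)$ and $\delta \ge 0$. Let $\{X(a)\}_{a\in\{0,1\}^n}$ and $\{Z(a)\}_{a\in\{0,1\}^n}$ be families of efficient binary observables on a finite-dimensional Hilbert space $\mathcal{H}$ such that $W(a)W(b) = W(a+b)$ for all $W \in \{X,Z\}$ and all $a,b\in\{0,1\}^n$. Let $\rho$ be a normalised state on $\mathcal{H}$ with $\rho \overset{c}{\approx}_\delta \mathbb{E}_{a\in\{0,1\}^n} W(a)\rho W(a)$ for both $W \in \{X,Z\}$, and let $S \subseteq \{0,1\}^n$ be $\lambda$-biased. Then \[ \mathbb{E}_{a,b\in\{0,1\}^n} \|Z(a)X(b) - (-1)^{a\cdot b}X(b)Z(a)\|_\rho^2 \le \frac{1}{(1-\lambda)^2}\,\mathbb{E}_{a,b\in S}\|Z(a)X(b) - (-1)^{a\cdot b}X(b)Z(a)\|_\rho^2 + \frac{2\delta(2-\lambda)}{(1-\lambda)^2}. \]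
   Context: A binary observable is a Hermitian unitary. The state-dependent norm is $\|A\|_\rho^2 := \mathrm{Tr}[A^\dagger A\rho]$. Expectations over sets are uniform. A set $S \subseteq \{0,1\}^n$ is $\lambda$-biased if for every nonzero $b \in \{0,1\}^n$, $|\mathbb{E}_{a \in S}(-1)^{a\cdot b}| \le \lambda$. For states $\rho,\rho'$, the relation $\rho \overset{c}{\approx}_\delta \rho'$ is taken (as in the paper's usage) to mean: for all efficiently implementable unitaries $U, U'$ (on the relevant Hilbert space, including after tensoring with an auxiliary maximally mixed register and efficient Pauli operators on it), $\big|\|U - U'\|_\rho^2 - \|U-U'\|_{\rho'}^2\big| \le \delta$; ''efficient'' refers to implementability by polynomial-size quantum circuits. *)

(* Hilbert space H = C^d for an arbitrary numClosedFieldType C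
   (e.g. algC or complex numbers over a real closed field). *)
From HB Require Import structures.
From mathcomp Require Import all_boot all_order all_algebra.
From mathcomp Require Import mxtens.
Set Implicit Arguments. Unset Strict Implicit. Unset Printing Implicit Defensive.
Import Order.TTheory GRing.Theory Num.Theory.
Local Open Scope ring_scope.

Section Defs.
Variable C : numClosedFieldType.

Definition adj m n (A : 'M[C]_(m, n)) : 'M[C]_(n, m) := map_mx Num.conj A^T.

Definition unitary d (U : 'M[C]_d) : Prop :=
  adj U *m U = 1%:M /\ U *m adj U = 1%:M.

Definition hermitian d (A : 'M[C]_d) : Prop := adj A = A.

Definition binary_observable d (A : 'M[C]_d) : Prop := hermitian A /\ unitary A.

Definition psd d (A : 'M[C]_d) : Prop :=
  hermitian A /\ forall v : 'cV[C]_d, 0 <= (adj v *m A *m v) 0 0.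
Definition state d (rho : 'M[C]_d) : Prop := psd rho /\ \tr rho = 1.

Definition nrm2 d (rho A : 'M[C]_d) : C := \tr (adj A *m A *m rho).

Definition Exp (T : finType) (S : {set T}) (f : T -> C) : C :=
  (#|S|%:R)^-1 * \sum_(a in S) f a.

Definition sgn n (a b : 'rV['F_2]_n) : C :=
  (-1) ^+ (nat_of_ord ((a *m b^T) 0 0)).

Definition lambda_biased n (lam : C) (S : {set 'rV['F_2]_n}) : Prop :=
  forall b : 'rV['F_2]_n, b != 0 -> `| Exp S (fun a => sgn a b) | <= lam.

(* Abstract model of "efficiently implementable unitaries" on C^d:
   a class of unitaries containing the identity and -1 and closed under
   composition. *)
Record eff_class d (Eff : 'M[C]_d -> Prop) : Prop := {
  eff_unitary : forall U, Eff U -> unitary U;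
  eff_id : Eff 1%:M;
  eff_neg : Eff (- 1%:M);
  eff_mul : forall U V, Eff U -> Eff V -> Eff (U *m V)
}.

(* single-qubit Pauli operators with phases i^k, acting on an auxiliary qubit *)
Definition pauli0 (j : 'I_4) : 'M[C]_2 :=
  \matrix_(r < 2, c < 2)
    (match nat_of_ord j with
     | 0%N => if r == c then 1 else 0
     | 1%N => if r == c then 0 else 1
     | 2%N => if r == c then 0 else (if (nat_of_ord r == 0%N) then - 'i else 'i)
     | _ => if r == c then (if (nat_of_ord r == 0%N) then 1 else -1) else 0
     end).
Definition pauli (k j : 'I_4) : 'M[C]_2 := ('i ^+ k) *: pauli0 j.

Definition mixed2 : 'M[C]_2 := (2%:R)^-1 *: 1%:M.

(* rho ~c_delta rho' relative to the efficiency class Eff, including the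
   version with an auxiliary maximally mixed qubit and Pauli operators on it *)
Definition capprox d (Eff : 'M[C]_d -> Prop) (delta : C) (rho rho' : 'M[C]_d) : Prop :=
  (forall U U', Eff U -> Eff U' ->
     `| nrm2 rho (U - U') - nrm2 rho' (U - U') | <= delta) /\
  (forall U U' (k j k' j' : 'I_4), Eff U -> Eff U' ->
     `| nrm2 (rho *t mixed2) (U *t pauli k j - U' *t pauli k' j')
      - nrm2 (rho' *t mixed2) (U *t pauli k j - U' *t pauli k' j') | <= delta).

Definition twirl n d (W : 'rV['F_2]_n -> 'M[C]_d) (rho : 'M[C]_d) : 'M[C]_d :=
  (#|[set: 'rV['F_2]_n]|%:R)^-1 *: \sum_(a : 'rV['F_2]_n) (W a *m rho *m W a).

End Defs.
Arguments sgn {C n}.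
Arguments pauli0 {C}.
Arguments pauli {C}.
Arguments mixed2 {C}.

From HB Require Import structures.
From mathcomp Require Import all_boot all_order all_algebra.
From mathcomp Require Import mxtens ring.
Set Implicit Arguments. Unset Strict Implicit. Unset Printing Implicit Defensive.
Import Order.TTheory GRing.Theory Num.Theory.
Local Open Scope ring_scope.

(* Fix a and let sigma be rho twirled by X.  For binary observables the squared norm
   b |-> ||Z(a)X(b) - (-1)^(a.b) X(b)Z(a)||_sigma^2 expands to F(0) - F(b), and each Fourier
   coefficient of F is a multiple of Tr[M^2 rho] for a Hermitian M, hence nonnegative: this
   is what the twirl buys.  For such F, averaging F(0) - F over a lambda-biased set keeps at
   least a (1 - lambda) fraction of the uniform average.  Both terms of the commutator are
   efficient, so indistinguishability of rho and sigma moves the bound back to rho at an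
   additive cost delta on each side.  Doing this once in b (twirling by X) and once in a
   (twirling by Z) gives the factor (1 - lambda)^-2. *)

Section Adjoint.
Variable C : numClosedFieldType.

Lemma adjK m n (A : 'M[C]_(m, n)) : adj (adj A) = A.
Proof. by apply/matrixP => i j; rewrite !mxE conjCK. Qed.

Lemma adjM m n p (A : 'M[C]_(m, n)) (B : 'M[C]_(n, p)) :
  adj (A *m B) = adj B *m adj A.
Proof. by rewrite /adj trmx_mul map_mxM. Qed.

Lemma adjB m n (A B : 'M[C]_(m, n)) : adj (A - B) = adj A - adj B.
Proof. by rewrite /adj linearB map_mxB. Qed.

Lemma adjZ m n (c : C) (A : 'M[C]_(m, n)) : adj (c *: A) = c^* *: adj A.
Proof. by rewrite /adj linearZ map_mxZ. Qed.

Lemma adj_sum m n (I : finType) (F : I -> 'M[C]_(m, n)) :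
  adj (\sum_i F i) = \sum_i adj (F i).
Proof. by rewrite /adj linear_sum raddf_sum. Qed.

Lemma nrm2_ge0 d (rho A : 'M[C]_d) :
  (forall v : 'cV[C]_d, 0 <= (adj v *m rho *m v) 0 0) -> 0 <= nrm2 rho A.
Proof.
move=> rho_ge0; rewrite /nrm2 -mulmxA mxtrace_mulC /mxtrace.
apply: sumr_ge0 => i _.
have -> : (A *m rho *m adj A) i i = (row i A *m rho *m adj (row i A)) 0 0.
  by rewrite -row_mul !mxE; apply: eq_bigr => j _; rewrite !mxE.
by rewrite -{1}[row i A]adjK.
Qed.

Lemma observable_adj d (U : 'M[C]_d) : binary_observable U -> adj U = U.
Proof. by case. Qed.

Lemma observable_sqr d (U : 'M[C]_d) : binary_observable U -> U *m U = 1%:M.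
Proof. by case=> hermU [unitU _]; rewrite -{1}hermU. Qed.

End Adjoint.

Section Characters.
Variables (C : numClosedFieldType) (n : nat).
Local Notation G := 'rV['F_2]_n.

Lemma card_rowF2_neq0 : #|G|%:R != 0 :> C.
Proof. by rewrite pnatr_eq0 -lt0n; apply/card_gt0P; exists 0. Qed.

Lemma addrr_F2 (x : G) : x + x = 0.
Proof. by apply/matrixP => i j; rewrite !mxE addrr_pchar2. Qed.

Lemma addr_eq0_F2 (x y : G) : (x + y == 0) = (x == y).
Proof. by rewrite -(inj_eq (addIr y)) -addrA addrr_F2 addr0 add0r. Qed.

Lemma sgnC (a b : G) : sgn a b = sgn b a :> C.
Proof. by rewrite /sgn -[b *m a^T]trmxK trmx_mul trmxK [in RHS]mxE. Qed.

Lemma sign_F2D (x y : 'F_2) : (-1) ^+ (x + y)%R = (-1) ^+ x * (-1) ^+ y :> C.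
Proof.
by case: x y => [[|[|//]] ?] [[|[|//]] ?]; rewrite /= ?mulrNN ?mulr1 ?mul1r.
Qed.

Lemma sgnDl (a a' b : G) : sgn (a + a') b = sgn a b * sgn a' b :> C.
Proof. by rewrite /sgn mulmxDl mxE sign_F2D. Qed.

Lemma sgnDr (a b b' : G) : sgn a (b + b') = sgn a b * sgn a b' :> C.
Proof. by rewrite sgnC sgnDl !(sgnC b) (sgnC b'). Qed.

Lemma sgn0l (b : G) : sgn 0 b = 1 :> C.
Proof. by rewrite /sgn mul0mx mxE. Qed.

Lemma sgn0r (a : G) : sgn a 0 = 1 :> C.
Proof. by rewrite sgnC sgn0l. Qed.

Lemma sgn_pm1 (a b : G) : sgn a b = 1 :> C \/ sgn a b = -1 :> C.
Proof. by rewrite /sgn -signr_odd; case: odd; [right | left]. Qed.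

Lemma sgn_sqr (a b : G) : sgn a b * sgn a b = 1 :> C.
Proof. by case: (sgn_pm1 a b) => ->; rewrite ?mulrNN mulr1. Qed.

Lemma sgn_real (a b : G) : sgn a b \is @Num.real C.
Proof. by case: (sgn_pm1 a b) => ->; rewrite ?rpredN rpred1. Qed.

Lemma conj_sgn (a b : G) : (sgn a b)^* = sgn a b :> C.
Proof. exact/conj_Creal/sgn_real. Qed.

Lemma sum_sgn (b : G) :
  \sum_(w : G) sgn w b = (if b == 0 then #|G|%:R else 0) :> C.
Proof.
have [->|b_neq0] := eqVneq b 0.
  by rewrite -sumr_const; apply: eq_bigr => w _; rewrite sgn0r.
have [i bi_neq0] : exists i, b 0 i != 0.
  apply/existsP; apply: contraNT b_neq0 => /existsPn b0.
  by apply/eqP/matrixP => r j; rewrite ord1 mxE; apply/eqP/negbNE.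
have sgn_ei : sgn (delta_mx 0 i) b = -1 :> C.
  by rewrite /sgn -rowE !mxE; case: (b 0 i) bi_neq0 => [[|[|//]] ?].
(* Shifting by e_i, where b_i = 1, flips every sign. *)
set s := \sum_w _; have s_opp : s = - s.
  rewrite {1}/s (reindex_inj (addIr (delta_mx 0 i))) -mulN1r mulr_sumr /=.
  by apply: eq_bigr => w _; rewrite sgnDl sgn_ei mulrC.
have : s *+ 2 == 0 by rewrite mulr2n {1}s_opp addNr.
by rewrite mulrn_eq0 => /eqP.
Qed.

Lemma sum_sgn_shift (u : G) (f : G -> G -> C) :
  \sum_b sgn u b * \sum_c f (b + c) c = \sum_x \sum_y sgn u x * sgn u y * f x y.
Proof.
transitivity (\sum_c \sum_b sgn u (b + c) * sgn u c * f (b + c) c).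
  under eq_bigr do rewrite mulr_sumr.
  rewrite exchange_big; apply: eq_bigr => c _; apply: eq_bigr => b _.
  by rewrite sgnDr -[sgn u b * _ * _]mulrA sgn_sqr mulr1.
rewrite [RHS]exchange_big; apply: eq_bigr => c _.
by rewrite [RHS](reindex_inj (addIr c)).
Qed.

End Characters.

Section Expectation.
Variables (C : numClosedFieldType) (T : finType).
Implicit Types (S : {set T}) (f g : T -> C).

Lemma eq_Exp S f g : (forall x, x \in S -> f x = g x) -> Exp S f = Exp S g.
Proof. by move=> eq_fg; rewrite /Exp (eq_bigr _ eq_fg). Qed.

Lemma ler_Exp S f g : (forall x, x \in S -> f x <= g x) -> Exp S f <= Exp S g.
Proof.
move=> le_fg; rewrite /Exp ler_wpM2l ?invr_ge0 ?ler0n //.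
exact: ler_sum.
Qed.

Lemma Exp_cst S (k : C) : S != set0 -> Exp S (fun _ => k) = k.
Proof.
move=> S_neq0; rewrite /Exp sumr_const -(mulr_natr k) mulrC mulfK //.
by rewrite pnatr_eq0 -lt0n card_gt0.
Qed.

Lemma Exp_setT f : Exp [set: T] f = #|T|%:R^-1 * \sum_x f x.
Proof. by rewrite /Exp cardsT; under eq_bigl do rewrite inE. Qed.

Lemma ExpD S f g : Exp S (fun x => f x + g x) = Exp S f + Exp S g.
Proof. by rewrite /Exp big_split mulrDr. Qed.

Lemma ExpB S f g : Exp S (fun x => f x - g x) = Exp S f - Exp S g.
Proof. by rewrite /Exp sumrB mulrBr. Qed.

Lemma Exp_sum (I : finType) S (f : I -> T -> C) :
  Exp S (fun x => \sum_i f i x) = \sum_i Exp S (f i).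
Proof. by rewrite /Exp exchange_big mulr_sumr. Qed.

Lemma ExpMl S (k : C) f : Exp S (fun x => k * f x) = k * Exp S f.
Proof. by rewrite /Exp -mulr_sumr mulrCA. Qed.

Lemma Exp_real S f : (forall x, f x \is Num.real) -> Exp S f \is Num.real.
Proof. by move=> f_real; rewrite realM ?rpredV ?realn ?rpred_sum. Qed.

Lemma exchange_Exp (U : finType) (A : {set T}) (B : {set U}) (f : T -> U -> C) :
  Exp A (fun a => Exp B (f a)) = Exp B (fun b => Exp A (f^~ b)).
Proof. by rewrite /Exp -!mulr_sumr exchange_big mulrCA. Qed.

Lemma setT_neq0 (S : {set T}) : S != set0 -> [set: T] != set0.
Proof. by case/set0Pn=> x _; apply/set0Pn; exists x; rewrite inE. Qed.

Lemma Exp_transfer (S : {set T}) (k delta : C) (g h : T -> C) :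
  S != set0 -> 0 < k -> k * Exp [set: T] h <= Exp S h ->
  (forall x, `|g x - h x| <= delta) -> (forall x, 0 <= g x) -> (forall x, 0 <= h x) ->
  Exp [set: T] g <= k^-1 * Exp S g + (k^-1 * delta + delta).
Proof.
move=> S_neq0 k_gt0 le_h close_gh g_ge0 h_ge0.
have gh_real x : g x - h x \is Num.real by rewrite rpredB ?ger0_real.
have le_gh x : g x <= h x + delta.
  by rewrite -lerBlDl real_ler_normlW.
have le_hg x : h x <= g x + delta.
  rewrite -lerBlDl -[h x - g x]opprB.
  by apply: real_ler_normlW; rewrite ?rpredN ?normrN.
have ExpT : Exp [set: T] g <= Exp [set: T] h + delta.
  by rewrite -(Exp_cst delta (setT_neq0 S_neq0)) -ExpD; apply: ler_Exp.
have ExpS : Exp S h <= Exp S g + delta.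
  by rewrite -(Exp_cst delta S_neq0) -ExpD; apply: ler_Exp.
apply: (le_trans ExpT); rewrite addrA lerD2r -mulrDr ler_pdivlMl //.
exact: le_trans ExpS.
Qed.

Lemma Exp_pair_le (S : {set T}) (g : T -> T -> C) (c K : C) :
  S != set0 -> 0 <= c ->
  (forall a, Exp [set: T] (g a) <= c * Exp S (g a) + K) ->
  (forall b, Exp [set: T] (g^~ b) <= c * Exp S (g^~ b) + K) ->
  Exp [set: T] (fun a => Exp [set: T] (g a))
  <= c * (c * Exp S (fun a => Exp S (g a)) + K) + K.
Proof.
move=> S_neq0 c_ge0 le_row le_col; have T_neq0 := setT_neq0 S_neq0.
apply: (le_trans (ler_Exp (fun a _ => le_row a))).
rewrite ExpD ExpMl Exp_cst // exchange_Exp lerD2r ler_wpM2l //.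
apply: (le_trans (ler_Exp (fun b _ => le_col b))).
by rewrite ExpD ExpMl Exp_cst // exchange_Exp.
Qed.

End Expectation.

Section Fourier.
Variables (C : numClosedFieldType) (n : nat).
Local Notation G := 'rV['F_2]_n.

Definition fourier (F : G -> C) (w : G) : C := Exp [set: G] (fun b => sgn w b * F b).

Lemma fourier_inversion (F : G -> C) (b : G) : F b = \sum_w fourier F w * sgn w b.
Proof.
transitivity (#|G|%:R^-1 * \sum_c F c * \sum_w sgn w (c + b)).
  rewrite [X in _ * X](bigD1 b) //= addrr_F2 sum_sgn eqxx big1 ?addr0 => [|c c_neq_b].
    by rewrite mulrCA mulVf ?mulr1 ?card_rowF2_neq0.
  by rewrite sum_sgn addr_eq0_F2 (negPf c_neq_b) mulr0.
under [RHS]eq_bigr do rewrite /fourier Exp_setT -mulrA mulr_suml.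
rewrite -mulr_sumr exchange_big /=; congr (_ * _); apply: eq_bigr => c _.
by rewrite mulr_sumr; apply: eq_bigr => w _; rewrite sgnDr mulrCA mulrA.
Qed.

Lemma lambda_biased_gap (lam : C) (S : {set G}) (F : G -> C) :
  S != set0 -> lambda_biased lam S -> (forall w, 0 <= fourier F w) ->
  (1 - lam) * (F 0 - Exp [set: G] F) <= F 0 - Exp S F.
Proof.
move=> S_neq0 biasS q_ge0; set q := fourier F.
pose beta (w : G) : C := Exp S (fun a => sgn a w).
have beta0 : beta 0 = 1.
  by rewrite /beta (eq_Exp (g := fun => 1)) ?Exp_cst // => a _; rewrite sgn0r.
have F0E : F 0 = \sum_w q w.
  by rewrite (fourier_inversion F 0); apply: eq_bigr => w _; rewrite sgn0r mulr1.
have ExpTE : Exp [set: G] F = q 0 by apply: eq_Exp => b _; rewrite sgn0l mul1r.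
have ExpSE : Exp S F = \sum_w q w * beta w.
  rewrite (eq_Exp (g := fun b => \sum_w q w * sgn w b)) => [|b _]; last first.
    exact: fourier_inversion.
  rewrite Exp_sum; apply: eq_bigr => w _; rewrite ExpMl; congr (_ * _).
  by apply: eq_Exp => b _; rewrite sgnC.
have gapT : \sum_w q w - q 0 = \sum_(w | w != 0) q w.
  by rewrite (bigD1 0) //= addrAC subrr add0r.
have gapS : \sum_w q w - \sum_w q w * beta w = \sum_(w | w != 0) q w * (1 - beta w).
  rewrite -sumrB (bigD1 0) //= beta0 mulr1 subrr add0r.
  by apply: eq_bigr => w _; rewrite mulrBr mulr1.
rewrite F0E ExpTE ExpSE gapT gapS mulr_sumr; apply: ler_sum => w w_neq0.
rewrite mulrC ler_wpM2l // lerB // real_ler_normlW ?biasS //.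
by apply: Exp_real => a; apply: sgn_real.
Qed.

End Fourier.

Section TwistedCommutator.
Variables (C : numClosedFieldType) (d : nat).
Implicit Types (sigma U V : 'M[C]_d) (s : C).

Lemma nrm2_twisted_commutator sigma U V s :
  binary_observable U -> binary_observable V -> s^* = s -> s * s = 1 ->
  nrm2 sigma (U *m V - s *: (V *m U)) =
  2%:R * \tr sigma - s * (\tr (V *m U *m V *m U *m sigma) + \tr (U *m V *m U *m V *m sigma)).
Proof.
move=> obsU obsV s_real s_sqr.
have VUUV : V *m U *m (U *m V) = 1%:M.
  by rewrite -mulmxA (mulmxA U) observable_sqr // mul1mx observable_sqr.
have UVVU : U *m V *m (V *m U) = 1%:M.
  by rewrite -mulmxA (mulmxA V) observable_sqr // mul1mx observable_sqr.
rewrite /nrm2 adjB adjZ !adjM !observable_adj // s_real.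
rewrite mulmxBl !mulmxBr -!scalemxAl -!scalemxAr !scalerA s_sqr scale1r VUUV UVVU.
rewrite (mulmxBl (1%:M - _)) (mulmxBl 1%:M) (mulmxBl (s *: _)) -!scalemxAl !mul1mx.
by rewrite !linearB /= !linearZ /= !mulmxA; ring.
Qed.

Lemma nrm2_twisted_commutatorC sigma U V s :
  binary_observable U -> binary_observable V -> s^* = s -> s * s = 1 ->
  nrm2 sigma (U *m V - s *: (V *m U)) = nrm2 sigma (V *m U - s *: (U *m V)).
Proof.
move=> obsU obsV s_real s_sqr.
by rewrite !nrm2_twisted_commutator // (addrC (\tr (V *m U *m V *m U *m sigma))).
Qed.

End TwistedCommutator.

Section Twirl.
Variables (C : numClosedFieldType) (n d : nat).
Local Notation G := 'rV['F_2]_n.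
Local Notation M := 'M[C]_d.
Variable P : G -> M.
Hypothesis obsP : forall a, binary_observable (P a).
Hypothesis PD : forall a b, P a *m P b = P (a + b).
Variable rho : M.
Hypothesis rho_ge0 : forall v : 'cV[C]_d, 0 <= (adj v *m rho *m v) 0 0.

Let N : C := #|G|%:R.

Lemma twirl_ge0 (v : 'cV[C]_d) : 0 <= (adj v *m twirl P rho *m v) 0 0.
Proof.
rewrite /twirl -scalemxAr -scalemxAl mulmx_sumr mulmx_suml mxE summxE.
rewrite mulr_ge0 ?invr_ge0 ?ler0n // sumr_ge0 // => a _.
have -> : adj v *m (P a *m rho *m P a) *m v = adj (P a *m v) *m rho *m (P a *m v).
  by rewrite adjM observable_adj // !mulmxA.
exact: rho_ge0.
Qed.

Lemma mxtrace_mul_twirl (A : M) :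
  \tr (A *m twirl P rho) = N^-1 * \sum_c \tr (A *m (P c *m rho *m P c)).
Proof. by rewrite /twirl cardsT -scalemxAr mulmx_sumr linearZ linear_sum. Qed.

Lemma mxtrace_twirl : \tr (twirl P rho) = \tr rho.
Proof.
rewrite -[twirl P rho]mul1mx mxtrace_mul_twirl.
under eq_bigr do rewrite mul1mx mxtrace_mulC mulmxA observable_sqr // mul1mx.
by rewrite sumr_const -(mulr_natr (\tr rho)) mulrC mulfK ?card_rowF2_neq0.
Qed.

Variable B : M.
Hypothesis obsB : binary_observable B.
Variable u : G.

Let Q b := P b *m B *m P b.
Let Mu := \sum_b sgn u b *: Q b.

Lemma mxtrace_PBPB_conj (b c : G) :
  \tr (P b *m B *m P b *m B *m (P c *m rho *m P c)) = \tr (Q (b + c) *m Q c *m rho).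
Proof.
have Pb : P b = P (b + c) *m P c by rewrite PD -addrA addrr_F2 addr0.
have PcPb : P c *m P b = P (b + c) by rewrite PD addrC.
by rewrite !mulmxA mxtrace_mulC !mulmxA PcPb Pb /Q !mulmxA.
Qed.

Lemma mxtrace_BPBP_conj (b c : G) :
  \tr (B *m P b *m B *m P b *m (P c *m rho *m P c)) = \tr (Q c *m Q (b + c) *m rho).
Proof.
have Pb : P b = P c *m P (b + c) by rewrite PD addrCA addrr_F2 addr0.
rewrite !mulmxA mxtrace_mulC !mulmxA -[_ *m P b *m P c]mulmxA PD.
by rewrite Pb /Q !mulmxA.
Qed.

Lemma mxtrace_Mu_sqr :
  \tr (Mu *m Mu *m rho) = \sum_x \sum_y sgn u x * sgn u y * \tr (Q x *m Q y *m rho).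
Proof.
rewrite /Mu mulmx_suml mulmx_suml linear_sum /=; apply: eq_bigr => x _.
rewrite -!scalemxAl linearZ /= mulmx_sumr mulmx_suml linear_sum mulr_sumr.
by apply: eq_bigr => y _; rewrite -scalemxAr -scalemxAl linearZ /= mulrA.
Qed.

Lemma adj_Mu : adj Mu = Mu.
Proof.
rewrite /Mu adj_sum; apply: eq_bigr => b _.
by rewrite adjZ conj_sgn /Q !adjM !observable_adj // !mulmxA.
Qed.

(* Both sums equal N^-1 Tr[Mu^2 rho], and Mu is Hermitian. *)
Lemma twirl_sgn_sum_ge0 : 0 <= \sum_b sgn u b *
  (\tr (P b *m B *m P b *m B *m twirl P rho) + \tr (B *m P b *m B *m P b *m twirl P rho)).
Proof.
have Mu2_ge0 : 0 <= \tr (Mu *m Mu *m rho) by rewrite -{1}adj_Mu; exact: nrm2_ge0.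
have PBPB : \sum_b sgn u b * \tr (P b *m B *m P b *m B *m twirl P rho) =
            N^-1 * \tr (Mu *m Mu *m rho).
  under eq_bigr do rewrite mxtrace_mul_twirl mulrCA.
  rewrite -mulr_sumr mxtrace_Mu_sqr.
  rewrite -(sum_sgn_shift u (fun x y => \tr (Q x *m Q y *m rho))); congr (_ * _).
  by apply: eq_bigr => b _; under eq_bigr do rewrite mxtrace_PBPB_conj.
have BPBP : \sum_b sgn u b * \tr (B *m P b *m B *m P b *m twirl P rho) =
            N^-1 * \tr (Mu *m Mu *m rho).
  under eq_bigr do rewrite mxtrace_mul_twirl mulrCA.
  rewrite -mulr_sumr mxtrace_Mu_sqr exchange_big /=.
  under [in RHS]eq_bigr do under eq_bigr do rewrite (mulrC (sgn u _)).
  rewrite -(sum_sgn_shift u (fun x y => \tr (Q y *m Q x *m rho))); congr (_ * _).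
  by apply: eq_bigr => b _; under eq_bigr do rewrite mxtrace_BPBP_conj.
under eq_bigr do rewrite mulrDr.
by rewrite big_split /= PBPB BPBP -mulrDr mulr_ge0 ?invr_ge0 ?ler0n ?addr_ge0.
Qed.

End Twirl.

Section CommutatorBound.
Variables (C : numClosedFieldType) (n d : nat).
Local Notation G := 'rV['F_2]_n.
Local Notation M := 'M[C]_d.

Lemma twirl_commutator_bound (P : G -> M) (B rho : M) (lam : C) (S : {set G}) (a : G) :
  (forall b, binary_observable (P b)) -> (forall b c, P b *m P c = P (b + c)) ->
  binary_observable B -> state rho -> S != set0 -> lambda_biased lam S ->
  (1 - lam) * Exp [set: G] (fun b => nrm2 (twirl P rho) (B *m P b - sgn a b *: (P b *m B)))
  <= Exp S (fun b => nrm2 (twirl P rho) (B *m P b - sgn a b *: (P b *m B))).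
Proof.
move=> obsP PD obsB [[_ rho_ge0] tr_rho] S_neq0 biasS; set sigma := twirl P rho.
pose F b := sgn a b *
  (\tr (P b *m B *m P b *m B *m sigma) + \tr (B *m P b *m B *m P b *m sigma)).
have P0 : P 0 = 1%:M by rewrite -(observable_sqr (obsP 0)) PD addr0.
have F0 : F 0 = 2%:R.
  rewrite /F sgn0r mul1r P0 !mulmx1 !mul1mx observable_sqr // mul1mx.
  by rewrite /sigma mxtrace_twirl // tr_rho.
have nrm2E b : nrm2 sigma (B *m P b - sgn a b *: (P b *m B)) = F 0 - F b.
  rewrite nrm2_twisted_commutator ?conj_sgn ?sgn_sqr //.
  by rewrite /sigma mxtrace_twirl // tr_rho F0 mulr1.
under eq_Exp do rewrite nrm2E.
under [X in _ <= X]eq_Exp do rewrite nrm2E.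
rewrite !ExpB !Exp_cst ?(setT_neq0 S_neq0) //.
apply: lambda_biased_gap => // w.
rewrite /fourier Exp_setT mulr_ge0 ?invr_ge0 ?ler0n //.
under eq_bigr do rewrite mulrA -sgnDl.
exact: twirl_sgn_sum_ge0.
Qed.

Variable Eff : M -> Prop.
Hypothesis effE : eff_class Eff.

Lemma eff_sgnZ (a b : G) (U : M) : Eff U -> Eff (sgn a b *: U).
Proof.
move=> effU; case: (sgn_pm1 C a b) => ->; first by rewrite scale1r.
by rewrite scaleN1r -[U]mul1mx -mulNmx; apply: eff_mul => //; apply: eff_neg.
Qed.

Lemma commutator_row_bound (P : G -> M) (B rho : M) (lam delta : C) (S : {set G}) (a : G) :
  (forall b, binary_observable (P b) /\ Eff (P b)) -> (forall b c, P b *m P c = P (b + c)) ->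
  binary_observable B -> Eff B -> state rho -> capprox Eff delta rho (twirl P rho) ->
  S != set0 -> lambda_biased lam S -> lam < 1 ->
  Exp [set: G] (fun b => nrm2 rho (B *m P b - sgn a b *: (P b *m B)))
  <= (1 - lam)^-1 * Exp S (fun b => nrm2 rho (B *m P b - sgn a b *: (P b *m B)))
     + ((1 - lam)^-1 * delta + delta).
Proof.
move=> obs_effP PD obsB effB rho_state [close_twirl _] S_neq0 biasS lam_lt1.
have obsP b : binary_observable (P b) by case: (obs_effP b).
have effP b : Eff (P b) by case: (obs_effP b).
have [[_ rho_ge0] _] := rho_state.
apply: Exp_transfer (twirl_commutator_bound a obsP PD obsB rho_state S_neq0 biasS) _ _ _
  => //.
- by rewrite subr_gt0.
- by move=> b; apply: close_twirl; [apply: (eff_mul effE) | apply/eff_sgnZ/(eff_mul effE)].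
- by move=> b; apply: nrm2_ge0.
- by move=> b; apply/nrm2_ge0/twirl_ge0.
Qed.

End CommutatorBound.

Lemma double_transfer_error_le (C : numClosedFieldType) (lam delta Y : C) :
  0 <= lam -> lam < 1 -> 0 <= delta ->
  (1 - lam)^-1 * ((1 - lam)^-1 * Y + ((1 - lam)^-1 * delta + delta))
    + ((1 - lam)^-1 * delta + delta)
  <= ((1 - lam) ^+ 2)^-1 * Y + 2%:R * delta * (2%:R - lam) / (1 - lam) ^+ 2.
Proof.
move=> lam_ge0 lam_lt1 delta_ge0.
have lam1_neq0 : 1 - lam != 0 by rewrite subr_eq0 eq_sym lt_eqF.
rewrite -subr_ge0 -[X in 0 <= X](_ : delta * lam * (2%:R - lam) / (1 - lam) ^+ 2 = _).
  rewrite !mulr_ge0 ?invr_ge0 ?exprn_ge0 ?subr_ge0 ?(ltW lam_lt1) //.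
  by rewrite (le_trans (ltW lam_lt1)) ?ler1n.
by field.
Qed.

Unset Implicit Arguments. Set Strict Implicit.

Theorem corollary3p5 (C : numClosedFieldType) (n d : nat)
  (Eff : 'M[C]_d -> Prop) (lam delta : C)
  (X Z : 'rV['F_2]_n -> 'M[C]_d) (rho : 'M[C]_d) (S : {set 'rV['F_2]_n}) :
  eff_class Eff ->
  0 <= lam -> lam < 1 -> 0 <= delta ->
  (forall a, binary_observable (X a) /\ Eff (X a)) ->
  (forall a, binary_observable (Z a) /\ Eff (Z a)) ->
  (forall a b, X a *m X b = X (a + b)) ->
  (forall a b, Z a *m Z b = Z (a + b)) ->
  state rho ->
  capprox Eff delta rho (twirl X rho) ->
  capprox Eff delta rho (twirl Z rho) ->
  S != set0 ->
  lambda_biased lam S ->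
  Exp [set: 'rV['F_2]_n] (fun a => Exp [set: 'rV['F_2]_n] (fun b =>
      nrm2 rho (Z a *m X b - sgn a b *: (X b *m Z a))))
  <= ((1 - lam) ^+ 2)^-1 *
     Exp S (fun a => Exp S (fun b => nrm2 rho (Z a *m X b - sgn a b *: (X b *m Z a))))
   + 2%:R * delta * (2%:R - lam) / (1 - lam) ^+ 2.
Proof.
move=> effE lam_ge0 lam_lt1 delta_ge0 obs_effX obs_effZ XD ZD rho_state closeX closeZ
  S_neq0 biasS.
have obsX b : binary_observable (X b) by case: (obs_effX b).
have obsZ a : binary_observable (Z a) by case: (obs_effZ a).
pose f a b := nrm2 rho (Z a *m X b - sgn a b *: (X b *m Z a)).
pose K := (1 - lam)^-1 * delta + delta.
have rows a : Exp [set: _] (f a) <= (1 - lam)^-1 * Exp S (f a) + K.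
  by apply: (commutator_row_bound effE) => //; case: (obs_effZ a).
have cols b : Exp [set: _] (f^~ b) <= (1 - lam)^-1 * Exp S (f^~ b) + K.
  have swap a : f a b = nrm2 rho (X b *m Z a - sgn b a *: (Z a *m X b)).
    by rewrite /f sgnC nrm2_twisted_commutatorC ?conj_sgn ?sgn_sqr.
  rewrite !(eq_Exp (fun a _ => swap a)).
  by apply: (commutator_row_bound effE) => //; case: (obs_effX b).
apply: le_trans (Exp_pair_le S_neq0 _ rows cols) _.
  by rewrite invr_ge0 subr_ge0 ltW.
exact: double_transfer_error_le.
Qed.
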